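(* Let $p,q$ be distinct odd primes with $p\equiv 1\pmod 4$, $q\equiv 3\pmod 4$ and $\gcd(p-1,q-1)=2$, having a common primitive root $g$. With the Gauss periods $\eta_0,\eta_1,\delta_0^{p},\delta_1^{p},\delta_0^{q},\delta_1^{q}$ defined in the context, $$\eta_0^{2}\left(\delta_1^{p}\delta_1^{q}+\delta_0^{p}\delta_0^{q}\right)+\eta_1^{2}\left(\delta_1^{p}\delta_0^{q}+\delta_0^{p}\delta_1^{q}\right)=\frac{1-pq}{4}+\epsilon\,\frac{pq}{2}$$ for some sign $\epsilon\in\{1,-1\}$.
   Context: Let $N=pq$ and $e=(p-1)(q-1)/2$. Let $x$ be the unique element of $\mathbb{Z}_N$ with $x\equiv g\pmod p$ and $x\equiv 1\pmod q$. The Whiteman generalized cyclotomic classes of order 2 are $D_i=\{g^{s}x^{i}\bmod N: s=0,1,\dots,e-1\}$ for $i=0,1$; they partition the unit group $\mathbb{Z}_N^{*}$. For a prime $r\in\{p,q\}$, the classical cyclotomic classes are $D_0^{(r)}=\{g^{2t}\bmod r: 0\le t\le \frac{r-1}{2}-1\}$ and $D_1^{(r)}=\{g^{2t+1}\bmod r: 0\le t\le \frac{r-1}{2}-1\}$. Let $\omega_r=e^{2\pi i/r}$ and $\omega_N=e^{2\pi i/N}$. The Gauss periods are $\delta_j^{r}=\sum_{k\in D_j^{(r)}}\omega_r^{k}$ for $r\in\{p,q\}$, $j=0,1$, and $\eta_j=\sum_{k\in D_j}\omega_N^{k}$ for $j=0,1$. *)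

From HB Require Import structures.
From mathcomp Require Import all_boot all_order all_algebra.
From mathcomp Require Import complex.
From mathcomp Require Import reals trigo.
Set Implicit Arguments. Unset Strict Implicit. Unset Printing Implicit Defensive.
Import Order.TTheory GRing.Theory Num.Theory.
Local Open Scope ring_scope.
Local Open Scope complex_scope.

Definition prim_root_mod (r g : nat) : Prop :=
  [/\ coprime g r, (g ^ totient r = 1 %[mod r])%N &
      forall k : nat, (0 < k)%N -> (g ^ k = 1 %[mod r])%N -> (totient r <= k)%N].

Definition omega (R : realType) (n : nat) : R[i] :=
  (cos (2 * pi / n%:R))%:C + 'i * (sin (2 * pi / n%:R))%:C.

Definition xW (p q g : nat) : nat := (chinese p q g 1 %% (p * q))%N.

Definition eW (p q : nat) : nat := ((p.-1 * q.-1) %/ 2)%N.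

Definition whiteman (p q g i : nat) : pred nat :=
  fun k => [exists s : 'I_(eW p q), k == (g ^ s * (xW p q g) ^ i) %% (p * q)]%N.

Definition cycl (r g j : nat) : pred nat :=
  fun k => [exists t : 'I_(r.-1 %/ 2), k == g ^ (2 * t + j) %% r]%N.

Definition eta (R : realType) (p q g j : nat) : R[i] :=
  \sum_(0 <= k < p * q | whiteman p q g j k) omega R (p * q) ^+ k.

Definition delta (R : realType) (r g j : nat) : R[i] :=
  \sum_(0 <= k < r | cycl r g j k) omega R r ^+ k.

From mathcomp Require Import all_boot all_order all_algebra.
From mathcomp Require Import complex.
From mathcomp Require Import reals trigo.
From mathcomp Require Import zify ring lra.

(* Let chi_r be the quadratic character modulo an odd prime r, defined through the
   primitive root g: it is 1 on D_0^(r), -1 on D_1^(r) and 0 on multiples of r, and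
   let G_r(u) = sum_a chi_r(a) z^(u a) be its Gauss sum at a primitive r-th root z.
   The proof rests on three families of facts:
   - linear relations: delta_0 + delta_1 = -1, delta_0 - delta_1 = G_r(1), and,
     because D_0, D_1 are the level sets of chi_p chi_q on the units mod N = pq
     (a counting argument using gcd(p-1, q-1) = 2), eta_0 + eta_1 = 1 and, by the
     Chinese remainder theorem, eta_0 - eta_1 = G_p(u0) G_q(v0);
   - the evaluation G_r(u)^2 = chi_r(-1) r for r not dividing u, with
     chi_r(-1) = (-1)^((r-1)/2);
   - elementary algebra: with A, B, C the three differences, C^2 = -pq and
     (ABC)^2 = (pq)^2, so ABC = eps pq, and the left-hand side equals
     (1 + C^2)/4 + ABC/2.
   The file develops discrete logarithms modulo a prime, the quadratic character,
   the Whiteman classes, Gauss sums over an arbitrary integral domain, the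
   primitivity of omega_n, the period relations, and finally the theorem. *)

Set Implicit Arguments. Unset Strict Implicit. Unset Printing Implicit Defensive.
Import Order.TTheory GRing.Theory Num.Theory.

Lemma mod_cancel r a b c : coprime a r -> a * b = a * c %[mod r] -> b = c %[mod r].
Proof.
move=> a_co; wlog le_cb : b c / c <= b.
  move=> IH; case: (leqP c b) => [/IH // | /ltnW le_bc /esym e].
  exact/esym/(IH _ _ le_bc e).
move/eqP; rewrite eqn_mod_dvd ?leq_mul2l ?le_cb ?orbT // -mulnBr Gauss_dvdr 1?coprime_sym //.
by move=> dvd_r; apply/eqP; rewrite eqn_mod_dvd.
Qed.

Lemma congr_mod_dvd d m a b : d %| m -> a = b %[mod m] -> a = b %[mod d].
Proof. by move=> d_dvd_m e; rewrite -(modn_dvdm a d_dvd_m) e modn_dvdm. Qed.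

Lemma eq_mod_lcm m n a b : a = b %[mod m] -> a = b %[mod n] ->
  a < lcmn m n -> b < lcmn m n -> a = b.
Proof.
wlog le_ba : a b / b <= a.
  move=> IH; case: (leqP b a) => [/IH // | /ltnW le_ab ea eb la lb].
  exact/esym/(IH _ _ le_ab (esym ea) (esym eb)).
move=> /eqP ea /eqP eb lt_a _; rewrite !eqn_mod_dvd // in ea eb.
have : lcmn m n %| a - b by rewrite dvdn_lcm ea eb.
by case/dvdnP => [[|k] dk]; nia.
Qed.

Section DiscreteLog.
Variables r g : nat.
Hypotheses (r_prime : prime r) (g_prim : prim_root_mod r g).

Lemma prim_root_coprime : coprime g r.
Proof. by case: g_prim. Qed.

Lemma pred_prime_gt0 : 0 < r.-1.
Proof. by have := prime_gt1 r_prime; lia. Qed.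

Lemma expg_mod m : g ^ m = g ^ (m %% r.-1) %[mod r].
Proof.
have period : g ^ (m %/ r.-1 * r.-1) = 1 %[mod r].
  case: g_prim => _ + _; rewrite totient_prime // => g_order.
  by rewrite mulnC expnM -modnXm g_order modnXm exp1n.
by rewrite {1}(divn_eq m r.-1) expnD -modnMml period modnMml mul1n.
Qed.

Lemma expg_eq1 k : g ^ k = 1 %[mod r] -> r.-1 %| k.
Proof.
move=> gk1; case: g_prim => _ _; rewrite totient_prime // => minimal.
rewrite /dvdn; case: (posnP (k %% r.-1)) => [// | rem_gt0].
have := minimal _ rem_gt0; rewrite -expg_mod gk1 => /(_ erefl).
by rewrite leqNgt ltn_pmod ?pred_prime_gt0.
Qed.

Lemma expg_eq_mod a b : g ^ a = g ^ b %[mod r] -> a = b %[mod r.-1].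
Proof.
wlog le_ab : a b / a <= b.
  move=> IH; case: (leqP a b) => [/IH // | /ltnW le_ba /esym e].
  exact/esym/(IH _ _ le_ba e).
move=> e; apply/eqP; rewrite eq_sym eqn_mod_dvd //; apply: expg_eq1.
apply: (@mod_cancel r (g ^ a)); first exact: coprimeXl prim_root_coprime.
by rewrite -expnD subnKC // muln1 e.
Qed.

Lemma expg_mod_neq0 m : g ^ m %% r != 0.
Proof.
apply/negP; rewrite -/(dvdn r _) => r_dvd.
by have := coprimeXl m prim_root_coprime; rewrite coprime_sym prime_coprime // r_dvd.
Qed.

Lemma expg_onto k : k %% r != 0 -> exists2 m, m < r.-1 & g ^ m = k %[mod r].
Proof.
move=> k_nz; have r_gt1 := prime_gt1 r_prime.
have res_lt m : (g ^ m %% r).-1 < r.-1.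
  by have := ltn_pmod (g ^ m) (ltnW r_gt1); have := expg_mod_neq0 m; lia.
pose f (m : 'I_r.-1) : 'I_r.-1 := Ordinal (res_lt m).
have f_inj : injective f.
  move=> m m' /(congr1 val) /= eq_res.
  have e : g ^ m = g ^ m' %[mod r].
    by move: eq_res; have := expg_mod_neq0 m; have := expg_mod_neq0 m'; lia.
  by apply/val_inj; have := expg_eq_mod e; rewrite !modn_small.
have k_lt : (k %% r).-1 < r.-1 by have := ltn_pmod k (ltnW r_gt1); lia.
have /codomP [m /(congr1 val) /= fm] := injF_onto f_inj (Ordinal k_lt).
by exists m => //; move: fm; have := expg_mod_neq0 m; lia.
Qed.
End DiscreteLog.

Lemma sum_mulmod (V : nmodType) r u (F : nat -> V) : 0 < r -> coprime u r ->
  (\sum_(k < r) F k = \sum_(k < r) F ((u * k) %% r)%N)%R.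
Proof.
move=> r_gt0 u_co.
pose h (k : 'I_r) : 'I_r := Ordinal (ltn_pmod (u * k) r_gt0).
have h_inj : injective h.
  by move=> k k' /(congr1 val) /= /(mod_cancel u_co); rewrite !modn_small //; apply: val_inj.
by rewrite (reindex_inj h_inj).
Qed.

Lemma sum_crt (V : nmodType) p q (G : nat -> nat -> V) : 0 < p -> 0 < q -> coprime p q ->
  (\sum_(k < p * q) G (k %% p)%N (k %% q)%N = \sum_(a < p) \sum_(b < q) G a b)%R.
Proof.
move=> p_gt0 q_gt0 pq_co; have pq_gt0 : 0 < p * q by rewrite muln_gt0 p_gt0.
pose h (x : 'I_p * 'I_q) : 'I_(p * q) := Ordinal (ltn_pmod (chinese p q x.1 x.2) pq_gt0).
have h_p x : h x %% p = x.1.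
  by rewrite /= modn_dvdm ?dvdn_mulr // chinese_modl // modn_small.
have h_q x : h x %% q = x.2.
  by rewrite /= modn_dvdm ?dvdn_mull // chinese_modr // modn_small.
have h_bij : bijective h.
  apply: inj_card_bij; last by rewrite card_prod !card_ord.
  move=> [a b] [a' b'] e; have := h_p (a, b); have := h_q (a, b).
  by rewrite e h_p h_q => /= /val_inj -> /val_inj ->.
rewrite pair_bigA /= (reindex h); last exact: onW_bij.
by apply: eq_bigr => x _; rewrite h_p h_q.
Qed.

Section QuadraticCharacter.
Variables r g : nat.
Hypotheses (r_prime : prime r) (r_odd : odd r) (g_prim : prim_root_mod r g).

Definition qchar (k : nat) : int :=
  if cycl r g 0 (k %% r) then 1%R else if cycl r g 1 (k %% r) then (-1)%R else 0%R.

(* r - 1 is even, so the parity of a discrete logarithm is well defined. *)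
Lemma odd_pred : odd r.-1 = false.
Proof. by move: r_odd; case: (r) => [|n] //= /negPf. Qed.

Lemma cycl_expg m : cycl r g (odd m) (g ^ m %% r).
Proof.
set n := m %% r.-1; have lt_n : n < r.-1 by rewrite ltn_pmod ?pred_prime_gt0.
have odd_n : odd n = odd m by rewrite odd_mod // odd_pred.
have lt_t : n./2 < r.-1 %/ 2.
  by have := odd_pred; have := odd_double_half n; move: lt_n; rewrite odd_n -divn2; lia.
apply/existsP; exists (Ordinal lt_t) => /=; apply/eqP.
rewrite (expg_mod r_prime g_prim) -/n; congr (g ^ _ %% r).
by rewrite -{1}(odd_double_half n) odd_n -muln2 mulnC addnC.
Qed.

Lemma cyclP j k : cycl r g j k -> exists2 m, k = g ^ m %% r & odd m = odd j.
Proof. by case/existsP => t /eqP ->; exists (2 * t + j); rewrite // oddD oddM. Qed.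

Lemma cycl_expgN m : ~~ cycl r g (~~ odd m) (g ^ m %% r).
Proof.
apply/negP => /cyclP [m' e odd_m'].
have := expg_eq_mod r_prime g_prim (esym e) => /(congr1 odd).
by rewrite !odd_mod ?odd_pred // odd_m'; case: (odd m).
Qed.

Lemma cycl_mod_neq0 j k : cycl r g j k -> k %% r != 0.
Proof. by case/cyclP => m -> _; rewrite modn_mod expg_mod_neq0. Qed.

Lemma qchar_mod k : qchar (k %% r) = qchar k.
Proof. by rewrite /qchar modn_mod. Qed.

Lemma qchar_eqmod a b : a = b %[mod r] -> qchar a = qchar b.
Proof. by move=> e; rewrite -qchar_mod e qchar_mod. Qed.

Lemma qchar_expg m : qchar (g ^ m) = ((-1) ^+ m)%R.
Proof.
rewrite /qchar; have := cycl_expg m; have := cycl_expgN m.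
by rewrite -signr_odd; case: (odd m) => /= /negPf -> ->.
Qed.

Lemma qchar1 : qchar 1 = 1%R.
Proof. by rewrite -(expn0 g) qchar_expg. Qed.

Lemma qchar_g : qchar g = (-1)%R.
Proof. by rewrite -{1}[g]expn1 qchar_expg. Qed.

Lemma qchar_dvd k : r %| k -> qchar k = 0%R.
Proof.
rewrite /dvdn /qchar => /eqP k0.
by case: ifP => [/cycl_mod_neq0 | _]; [|case: ifP => [/cycl_mod_neq0|]]; rewrite ?k0 ?mod0n.
Qed.

Lemma qchar_unit k : ~~ (r %| k) -> exists2 m, qchar k = ((-1) ^+ m)%R & g ^ m = k %[mod r].
Proof.
by move=> r_ndvd; have [m _ e] := expg_onto r_prime g_prim r_ndvd; exists m; rewrite -?(qchar_eqmod e) ?qchar_expg.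
Qed.

Lemma qcharM a b : qchar (a * b) = (qchar a * qchar b)%R.
Proof.
have [r_a | /qchar_unit [m -> ea]] := boolP (r %| a).
  by rewrite qchar_dvd ?dvdn_mulr // qchar_dvd // mul0r.
have [r_b | /qchar_unit [m' -> eb]] := boolP (r %| b).
  by rewrite (qchar_dvd (dvdn_mull _ r_b)) (qchar_dvd r_b) mulr0.
rewrite -exprD -qchar_expg; apply/qchar_eqmod/esym.
by rewrite expnD -modnMm ea eb modnMm.
Qed.

Lemma qcharX a n : qchar (a ^ n) = (qchar a ^+ n)%R.
Proof.
elim: n => [|n IH]; first by rewrite expn0 qchar1.
by rewrite expnS qcharM IH exprS.
Qed.

Lemma qchar_eq0 k : (qchar k == 0%R) = (r %| k).
Proof.
have [/qchar_dvd -> // | /qchar_unit [m -> _]] := boolP (r %| k).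
by rewrite signr_eq0.
Qed.

Lemma qchar_sq k : ~~ (r %| k) -> (qchar k ^+ 2 = 1)%R.
Proof. by case/qchar_unit => m -> _; rewrite sqrr_sign. Qed.

Lemma qchar_sum : (\sum_(k < r) qchar k = 0)%R.
Proof.
have := sum_mulmod qchar (prime_gt0 r_prime) (prim_root_coprime g_prim).
under [X in _ = X -> _]eq_bigr => k _ do rewrite qchar_mod qcharM.
rewrite -mulr_sumr qchar_g.
by rewrite mulN1r => /eqP; rewrite -addr_eq0 -mulr2n mulrn_eq0 => /eqP.
Qed.

(* chi(-1) = (-1)^((r-1)/2): the unique nontrivial square root of 1 is g^((r-1)/2). *)
Lemma qchar_pred : qchar r.-1 = ((-1) ^+ (r.-1 %/ 2))%R.
Proof.
have r_gt2 : 2 < r by have := prime_gt1 r_prime; move: r_odd; case: (r) => [|[|[|]]].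
have [m lt_m gm] : exists2 m, m < r.-1 & g ^ m = r.-1 %[mod r].
  by apply: expg_onto => //; rewrite modn_small; lia.
rewrite -(qchar_eqmod gm) qchar_expg; congr (_ ^+ _)%R.
have dvd_2m : r.-1 %| m * 2.
  apply: (expg_eq1 r_prime g_prim); rewrite expnM -modnXm gm modnXm.
  have -> : r.-1 ^ 2 = (r - 2) * r + 1 by rewrite expnS expn1; nia.
  by rewrite modnMDl.
have m_gt0 : 0 < m.
  by move: gm; case: (m) => // /eqP; rewrite expn0 !modn_small //; lia.
by case/dvdnP: dvd_2m => [[|[|k]] e]; nia.
Qed.

Lemma qchar_pred_mod4 : qchar r.-1 = (if (r %% 4 == 1)%N then 1 else -1)%R.
Proof.
have r2 : r %% 2 = 1 by rewrite modn2 r_odd.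
rewrite qchar_pred -signr_odd -modn2; case: eqP => r4.
  by have -> : r.-1 %/ 2 %% 2 = 0 by lia.
by have -> : r.-1 %/ 2 %% 2 = 1 by lia.
Qed.

Lemma cycl_indicator k : k < r ->
  ((cycl r g 0 k)%:R - (cycl r g 1 k)%:R = qchar k :> int)%R /\
  ((cycl r g 0 k)%:R + (cycl r g 1 k)%:R = qchar k ^+ 2 :> int)%R.
Proof.
move=> lt_k; rewrite /qchar modn_small //.
have [c0 | _] := boolP (cycl r g 0 k); last by case: (cycl r g 1 k).
have [m km odd_m] := cyclP c0.
by have := cycl_expgN m; rewrite odd_m -km /= => /negPf ->.
Qed.
End QuadraticCharacter.

Section WhitemanClasses.
Variables p q g : nat.
Hypotheses (p_prime : prime p) (q_prime : prime q) (p_neq_q : p != q).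
Hypotheses (p_odd : odd p) (q_odd : odd q) (gcd_pred : gcdn p.-1 q.-1 = 2).
Hypotheses (gp : prim_root_mod p g) (gq : prim_root_mod q g).

Local Notation N := (p * q).
Local Notation x := (xW p q g).
Local Notation e := (eW p q).

Definition wchar (k : nat) : int := (qchar p g k * qchar q g k)%R.

Lemma pq_coprime : coprime p q.
Proof. by rewrite prime_coprime // dvdn_prime2. Qed.

Lemma x_modp : x = g %[mod p].
Proof. by rewrite /xW modn_dvdm ?dvdn_mulr // chinese_modl // pq_coprime. Qed.

Lemma x_modq : x = 1 %[mod q].
Proof. by rewrite /xW modn_dvdm ?dvdn_mull // chinese_modr // pq_coprime. Qed.

Lemma x_coprime : coprime x N.
Proof.
rewrite coprimeMr -(coprime_modl x p) -(coprime_modl x q) x_modp x_modq.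
by rewrite !coprime_modl coprime1n (prim_root_coprime gp).
Qed.

Lemma wchar_mod k : wchar (k %% N) = wchar k.
Proof.
rewrite /wchar (qchar_eqmod g (modn_dvdm k (dvdn_mulr q (dvdnn p)))).
by rewrite (qchar_eqmod g (modn_dvdm k (dvdn_mull p (dvdnn q)))).
Qed.

(* chi_p(x) = -1 and chi_q(x) = 1, so chi_p chi_q (g^s x^j) = (-1)^j. *)
Lemma wchar_class s j : wchar (g ^ s * x ^ j) = ((-1) ^+ j)%R.
Proof.
rewrite /wchar !qcharM // !qchar_expg // !qcharX //.
rewrite (qchar_eqmod g x_modp) (qchar_eqmod g x_modq) qchar_g // qchar1 //.
rewrite expr1n mulr1 mulrAC -exprD addnn.
by rewrite -muln2 mulnC exprM sqrrN !expr1n mul1r.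
Qed.

Lemma whiteman_wchar j k : whiteman p q g j k -> wchar k = ((-1) ^+ j)%R.
Proof. by case/existsP => s /eqP ->; rewrite wchar_mod wchar_class. Qed.

Lemma wchar_eq0 k : (wchar k == 0%R) = ~~ coprime k N.
Proof.
rewrite /wchar mulf_eq0 !qchar_eq0 // coprimeMr negb_and.
by rewrite !(coprime_sym k) !prime_coprime // !negbK.
Qed.

Lemma double_e : 2 * e = p.-1 * q.-1.
Proof.
have even_p : 2 %| p.-1 by rewrite dvdn2 odd_pred.
by rewrite /eW mulnC divnK // dvdn_mulr.
Qed.

Lemma lcm_e : lcmn p.-1 q.-1 = e.
Proof. by have := muln_lcm_gcd p.-1 q.-1; rewrite gcd_pred -double_e; lia. Qed.

Lemma whiteman_inj j s s' : s < e -> s' < e ->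
  (g ^ s * x ^ j) %% N = (g ^ s' * x ^ j) %% N -> s = s'.
Proof.
move=> lt_s lt_s' eq_N.
have eN : g ^ s = g ^ s' %[mod N].
  by apply: (mod_cancel (coprimeXl j x_coprime)); rewrite mulnC eq_N mulnC.
apply: (@eq_mod_lcm p.-1 q.-1); rewrite ?lcm_e //.
  exact/(expg_eq_mod p_prime gp)/(congr_mod_dvd (dvdn_mulr q (dvdnn p)) eN).
exact/(expg_eq_mod q_prime gq)/(congr_mod_dvd (dvdn_mull p (dvdnn q)) eN).
Qed.

Local Notation wset j := [set k : 'I_N | whiteman p q g j k].
Local Notation units_set := [set k : 'I_N | coprime k N].

Lemma card_wset j : e <= #|wset j|.
Proof.
have N_gt0 : 0 < N by rewrite muln_gt0 !prime_gt0.
pose f (s : 'I_e) : 'I_N := Ordinal (ltn_pmod (g ^ s * x ^ j) N_gt0).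
have f_inj : injective f.
  by move=> s s' /(congr1 val) /= /whiteman_inj eq_ss'; apply/val_inj/eq_ss'.
rewrite -[X in X <= _](card_ord e) -(card_imset _ f_inj); apply/subset_leq_card.
by apply/subsetP => k /imsetP [s _ ->]; rewrite inE; apply/existsP; exists s.
Qed.

Lemma card_units_set : #|units_set| = 2 * e.
Proof.
rewrite double_e -!totient_prime // -totient_coprime ?pq_coprime //.
rewrite totient_count_coprime -sum1_card big_mkord big_mkcond /=.
by apply: eq_bigr => k _; rewrite inE coprime_sym; case: ifP.
Qed.

Lemma wset_units j : wset j \subset units_set.
Proof.
apply/subsetP => k; rewrite !inE => /whiteman_wchar wk.
by rewrite -[coprime _ _]negbK -wchar_eq0 wk signr_eq0.
Qed.

(* D_0 and D_1 are disjoint, each of size >= e, inside a set of size 2e. *)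
Lemma whiteman_cover k : k < N -> coprime k N -> whiteman p q g 0 k || whiteman p q g 1 k.
Proof.
move=> lt_k co_k.
have disj : wset 0 :&: wset 1 = set0.
  apply/setP => l; rewrite !inE; apply/negP => /andP [/whiteman_wchar w0 /whiteman_wchar].
  by rewrite w0.
have cover : wset 0 :|: wset 1 = units_set.
  apply/eqP; rewrite eqEcard subUset !wset_units card_units_set /=.
  have := cardsUI (wset 0) (wset 1); rewrite disj cards0 addn0 => ->.
  by have := card_wset 0; have := card_wset 1; lia.
have : Ordinal lt_k \in units_set by rewrite inE.
by rewrite -cover !inE.
Qed.

Lemma whiteman_indicator k : k < N ->
  ((whiteman p q g 0 k)%:R - (whiteman p q g 1 k)%:R = wchar k :> int)%R /\
  ((whiteman p q g 0 k)%:R + (whiteman p q g 1 k)%:R = wchar k ^+ 2 :> int)%R.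
Proof.
move=> lt_k; have [co_k | nco_k] := boolP (coprime k N).
  case/orP: (whiteman_cover lt_k co_k) => w; have wk := whiteman_wchar w.
    have -> : whiteman p q g 1 k = false.
      by apply/negbTE/negP => /whiteman_wchar; rewrite wk.
    by rewrite w wk.
  have -> : whiteman p q g 0 k = false.
    by apply/negbTE/negP => /whiteman_wchar; rewrite wk.
  by rewrite w wk.
have wk0 : wchar k = 0%R by apply/eqP; rewrite wchar_eq0 nco_k.
have no_class j : whiteman p q g j k = false.
  by apply/negbTE/negP => /whiteman_wchar; rewrite wk0 => /eqP; rewrite eq_sym signr_eq0.
by rewrite !no_class wk0.
Qed.
End WhitemanClasses.

Local Open Scope ring_scope.

Lemma sum_dvd_succ (V : nmodType) r u (F : nat -> V) : prime r -> ~~ (r %| u)%N ->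
  \sum_(t < r) (if (r %| u * t.+1)%N then F t else 0) = F r.-1.
Proof.
move=> r_prime r_nu; have r_co : coprime r u by rewrite prime_coprime.
have lt_pred : (r.-1 < r)%N by rewrite ltn_predL prime_gt0.
rewrite (bigD1 (Ordinal lt_pred)) //= Gauss_dvdr // prednK ?prime_gt0 // dvdnn.
rewrite big1 ?addr0 // => t t_neq; rewrite Gauss_dvdr //.
case: ifP => // /dvdn_leq le_r; move: t_neq; rewrite -val_eqE /= => /eqP.
by have := ltn_ord t; lia.
Qed.

Section PrimitiveRootSums.
Variables (F : idomainType) (n : nat) (z : F).
Hypothesis z_prim : n.-primitive_root z.

Lemma prim_expr_eqmod i j : (i = j %[mod n])%N -> z ^+ i = z ^+ j.
Proof. by move=> e; apply/eqP; rewrite (eq_prim_root_expr z_prim) e. Qed.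

Lemma sum_prim_root_expr m :
  \sum_(k < n) z ^+ (m * k) = if (n %| m)%N then n%:R else 0.
Proof.
under eq_bigr => k _ do rewrite exprM.
rewrite (prim_order_dvd z_prim); case: eqP => [-> | /eqP zm_neq1].
  by under eq_bigr => k _ do rewrite expr1n; rewrite sumr_const card_ord.
have : (z ^+ m - 1) * \sum_(k < n) (z ^+ m) ^+ k = 0.
  by rewrite -subrX1 exprAC (prim_expr_order z_prim) expr1n subrr.
by move/eqP; rewrite mulf_eq0 subr_eq0 (negPf zm_neq1) => /eqP.
Qed.
End PrimitiveRootSums.

Section GaussSums.
Variables (F : idomainType) (r g : nat) (z : F).
Hypotheses (r_prime : prime r) (r_odd : odd r) (g_prim : prim_root_mod r g).
Hypothesis z_prim : r.-primitive_root z.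
Local Notation chi k := ((qchar r g k)%:~R : F).

Definition gauss (u : nat) : F := \sum_(a < r) chi a * z ^+ (u * a).

(* Twisted sum of chi^2, which is the indicator of the nonzero residues. *)
Lemma qchar_sq_sum m :
  \sum_(a < r) chi a ^+ 2 * z ^+ (m * a) = (if (r %| m)%N then r%:R else 0) - 1.
Proof.
have r_gt0 := prime_gt0 r_prime.
rewrite -(sum_prim_root_expr z_prim) -(big_mkord xpredT (fun a => z ^+ (m * a))).
rewrite -(big_mkord xpredT (fun a => chi a ^+ 2 * z ^+ (m * a))).
rewrite big_ltn // [X in _ = X - _]big_ltn //.
rewrite qchar_dvd ?dvdn0 // muln0 expr0 expr0n mul0r add0r addrC addKr.
apply: eq_big_nat => a /andP [a_gt0 lt_a].
by rewrite -rmorphXn /= qchar_sq // ?rmorph1 ?mul1r //; apply/negP => /dvdn_leq; lia.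
Qed.

(* Substituting b = a t in G(u) for a unit a. *)
Lemma gauss_shift u a :
  chi a * z ^+ (u * a) * gauss u = \sum_(t < r) chi t * (chi a ^+ 2 * z ^+ (u * t.+1 * a)).
Proof.
have [r_a | r_na] := boolP (r %| a)%N.
  by rewrite qchar_dvd // !mul0r big1 // => t _; rewrite expr0n !mul0r mulr0.
have a_co : coprime a r by rewrite coprime_sym prime_coprime.
rewrite /gauss (sum_mulmod (fun b => chi b * z ^+ (u * b)) (prime_gt0 r_prime) a_co).
rewrite mulr_sumr; apply: eq_bigr => t _.
rewrite qchar_mod qcharM // rmorphM /= (prim_expr_eqmod z_prim (modnMmr _ _ _)).
have -> : (u * t.+1 * a = u * a + u * (a * t))%N by ring.
by rewrite exprD; ring.
Qed.

Lemma gauss_sq u : ~~ (r %| u)%N -> gauss u ^+ 2 = chi r.-1 * r%:R.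
Proof.
move=> r_nu; rewrite expr2 {1}/gauss mulr_suml.
under eq_bigr => a _ do rewrite gauss_shift.
rewrite exchange_big /=.
under eq_bigr => t _ do rewrite -mulr_sumr qchar_sq_sum mulrBr mulr1.
rewrite sumrB -rmorph_sum /= qchar_sum // rmorph0 subr0.
rewrite -(sum_dvd_succ (fun t => chi t * r%:R) r_prime r_nu).
by apply: eq_bigr => t _; case: ifP; rewrite ?mulr0.
Qed.
End GaussSums.

Section Omega.
Variable R : realType.
Local Open Scope complex_scope.

Definition cis (x : R) : R[i] := cos x +i* sin x.

Lemma cisD x y : cis (x + y) = cis x * cis y.
Proof.
rewrite /cis cosD sinD; apply/eqP; rewrite eq_complex /=.
by apply/andP; split; apply/eqP; ring.
Qed.

Lemma cisX x m : cis x ^+ m = cis (m%:R * x).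
Proof.
elim: m => [|m IH]; first by rewrite expr0 mul0r /cis cos0 sin0.
by rewrite exprS IH -cisD -nat1r mulrDl mul1r.
Qed.

Lemma omega_expr n m : omega R n ^+ m = cis (m%:R * (2 * pi / n%:R)).
Proof.
rewrite -cisX; congr (_ ^+ _); apply/eqP; rewrite eq_complex /=.
by apply/andP; split; apply/eqP; ring.
Qed.

(* cos x = 1 forces sin (x / 2) = 0, which fails strictly between 0 and 2 pi. *)
Lemma cis_neq1 x : 0 < x < pi *+ 2 -> cis x != 1.
Proof.
move=> /andP [x_gt0 x_lt]; apply/negP => /eqP/eqP; rewrite eq_complex /= => /andP [/eqP cos1 _].
have sin_gt0 : 0 < sin (x / 2).
  by apply: sin_gt0_pi; rewrite divr_gt0 //= ltr_pdivrMr // mulr_natr.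
have half : x / 2 *+ 2 = x by rewrite -mulr_natr divfK ?pnatr_eq0.
have := cos_mulr2n (x / 2); rewrite half cos1 cos2sin2 => e.
have : sin (x / 2) ^+ 2 == 0 by apply/eqP; lra.
by rewrite sqrf_eq0 gt_eqF.
Qed.

Lemma omega_prim n : (0 < n)%N -> n.-primitive_root (omega R n).
Proof.
move=> n_gt0; have n_neq0 : n%:R != 0 :> R by rewrite pnatr_eq0 -lt0n.
apply/andP; split=> //; apply/forallP => i; apply/eqP; rewrite unity_rootE omega_expr.
case: (ltnP i.+1 n) => [lt_in | le_ni].
  rewrite ltn_eqF //; apply/negbTE/cis_neq1.
  have -> : i.+1%:R * (2 * pi / n%:R) = pi *+ 2 * (i.+1%:R / n%:R) :> R.
    by rewrite -mulr_natr; field.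
  have two_pi_gt0 : 0 < pi *+ 2 :> R by rewrite pmulrn_lgt0 // pi_gt0.
  apply/andP; split; first by rewrite mulr_gt0 // divr_gt0 ?ltr0n.
  by rewrite gtr_pMr // ltr_pdivrMr ?ltr0n // mul1r ltr_nat.
have -> : i.+1 = n by apply/eqP; rewrite eqn_leq le_ni ltn_ord.
have -> : n%:R * (2 * pi / n%:R) = pi *+ 2 :> R by rewrite -mulr_natr; field.
by rewrite /cis cos2pi sin2pi !eqxx.
Qed.
End Omega.

Lemma sum_indicator (V : pzSemiRingType) n (P : pred nat) (F : nat -> V) :
  \sum_(0 <= k < n | P k) F k = \sum_(k < n) (P k)%:R * F k.
Proof.
rewrite big_mkcond big_mkord; apply: eq_bigr => k _.
by case: (P k); rewrite ?mul1r ?mul0r.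
Qed.

Section CRTFactorisation.
(* For N = pq, a character sum over Z/NZ of a product of functions of k mod p and
   k mod q factors into sums over Z/pZ and Z/qZ; here k = a q u0 + b p v0 mod N. *)
Variables (F : idomainType) (p q : nat) (z : F).
Hypotheses (p_gt0 : (0 < p)%N) (q_gt0 : (0 < q)%N) (pq_co : coprime p q).
Hypothesis z_prim : (p * q).-primitive_root z.
Local Notation u0 := (egcdn q p).1.
Local Notation v0 := (egcdn p q).1.

Lemma crt_factor (A B : nat -> F) :
  \sum_(k < p * q) A (k %% p)%N * B (k %% q)%N * z ^+ k =
  (\sum_(a < p) A a * (z ^+ q) ^+ (u0 * a)) * (\sum_(b < q) B b * (z ^+ p) ^+ (v0 * b)).
Proof.
have term (k : 'I_(p * q)) : A (k %% p)%N * B (k %% q)%N * z ^+ k =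
    A (k %% p)%N * (z ^+ q) ^+ (u0 * (k %% p)) * (B (k %% q)%N * (z ^+ p) ^+ (v0 * (k %% q))).
  rewrite (prim_expr_eqmod z_prim (chinese_mod pq_co k)) /chinese -!exprM mulrACA -exprD.
  by congr (_ * z ^+ _); ring.
rewrite (eq_bigr _ (fun k _ => term k)).
rewrite (sum_crt (fun a b => A a * (z ^+ q) ^+ (u0 * a) * (B b * (z ^+ p) ^+ (v0 * b)))) //.
by rewrite mulr_suml; apply: eq_bigr => a _; rewrite mulr_sumr.
Qed.

Lemma prim_root_factors :
  p.-primitive_root (z ^+ q) /\ q.-primitive_root (z ^+ p).
Proof.
have := dvdn_prim_root z_prim (dvdn_mulr q (dvdnn p)).
have := dvdn_prim_root z_prim (dvdn_mull p (dvdnn q)).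
by rewrite mulKn // mulnK.
Qed.
End CRTFactorisation.

Section Periods.
Variable R : realType.

Section CyclotomicPeriods.
Variables r g : nat.
Hypotheses (r_prime : prime r) (r_odd : odd r) (g_prim : prim_root_mod r g).

Lemma delta_diff : delta R r g 0 - delta R r g 1 = gauss r g (omega R r) 1.
Proof.
rewrite /delta !sum_indicator -sumrB /gauss; apply: eq_bigr => k _.
have [diff _] := cycl_indicator r_prime r_odd g_prim (ltn_ord k).
by rewrite -mulrBl mul1n -diff rmorphB /= !rmorph_nat.
Qed.

Lemma delta_add : delta R r g 0 + delta R r g 1 = -1.
Proof.
have := qchar_sq_sum r_prime r_odd g_prim (omega_prim R (prime_gt0 r_prime)) 1.
rewrite dvdn1 (gtn_eqF (prime_gt1 r_prime)) sub0r => <-.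
rewrite /delta !sum_indicator -big_split; apply: eq_bigr => k /= _.
have [_ sum] := cycl_indicator r_prime r_odd g_prim (ltn_ord k).
by rewrite -mulrDl mul1n -rmorphXn -sum rmorphD /= !rmorph_nat.
Qed.

Lemma delta_diff_sq :
  (delta R r g 0 - delta R r g 1) ^+ 2 = (qchar r g r.-1)%:~R * r%:R.
Proof.
rewrite delta_diff gauss_sq ?omega_prim ?prime_gt0 //.
by rewrite dvdn1 (gtn_eqF (prime_gt1 r_prime)).
Qed.
End CyclotomicPeriods.

Section WhitemanPeriods.
Variables p q g : nat.
Hypotheses (p_prime : prime p) (q_prime : prime q) (p_neq_q : p != q).
Hypotheses (p_odd : odd p) (q_odd : odd q) (gcd_pred : gcdn p.-1 q.-1 = 2%N).
Hypotheses (gp : prim_root_mod p g) (gq : prim_root_mod q g).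
Local Notation N := (p * q)%N.
Local Notation w := (omega R N).
Local Notation u0 := (egcdn q p).1.
Local Notation v0 := (egcdn p q).1.
Local Notation chi_p k := ((qchar p g k)%:~R : R[i]).
Local Notation chi_q k := ((qchar q g k)%:~R : R[i]).

Lemma w_prim : N.-primitive_root w.
Proof. by rewrite omega_prim // muln_gt0 !prime_gt0. Qed.

Lemma w_factors : p.-primitive_root (w ^+ q) /\ q.-primitive_root (w ^+ p).
Proof. exact: prim_root_factors (prime_gt0 p_prime) (prime_gt0 q_prime) w_prim. Qed.

(* q u0 = 1 mod p and p v0 = 1 mod q, so p does not divide u0 nor q divide v0. *)
Lemma u0_ndvd : ~~ (p %| u0)%N.
Proof.
have := chinese_modl (pq_coprime p_prime q_prime p_neq_q) 1 0.
rewrite /chinese mul0n addn0 mul1n (modn_small (prime_gt1 p_prime)) => qu0.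
by apply/negP => /dvdnP [k hk]; move: qu0; rewrite hk mulnA modnMl.
Qed.

Lemma v0_ndvd : ~~ (q %| v0)%N.
Proof.
have := chinese_modr (pq_coprime p_prime q_prime p_neq_q) 0 1.
rewrite /chinese mul0n add0n mul1n (modn_small (prime_gt1 q_prime)) => pv0.
by apply/negP => /dvdnP [k hk]; move: pv0; rewrite hk mulnA modnMl.
Qed.

(* Expanding the indicators of D_0, D_1 by chi_p chi_q and factoring by CRT. *)
Lemma eta_diff :
  eta R p q g 0 - eta R p q g 1 = gauss p g (w ^+ q) u0 * gauss q g (w ^+ p) v0.
Proof.
rewrite /gauss -(crt_factor (prime_gt0 p_prime) (prime_gt0 q_prime)
  (pq_coprime p_prime q_prime p_neq_q) w_prim (fun a => chi_p a) (fun b => chi_q b)).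
rewrite /eta !sum_indicator -sumrB; apply: eq_bigr => k _.
have [diff _] := whiteman_indicator p_prime q_prime p_neq_q p_odd q_odd gcd_pred gp gq (ltn_ord k).
by rewrite -mulrBl !qchar_mod -rmorphM /= -/(wchar p q g k) -diff rmorphB /= !rmorph_nat.
Qed.

(* The indicator of D_0 u D_1 is (chi_p chi_q)^2, whose sum factors as (-1)(-1). *)
Lemma eta_add : eta R p q g 0 + eta R p q g 1 = 1.
Proof.
have [wq_prim wp_prim] := w_factors.
have := qchar_sq_sum p_prime p_odd gp wq_prim u0; rewrite (negPf u0_ndvd) sub0r => sum_p.
have := qchar_sq_sum q_prime q_odd gq wp_prim v0; rewrite (negPf v0_ndvd) sub0r => sum_q.
have -> : 1 = -1 * -1 :> R[i] by rewrite mulrNN mulr1.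
rewrite -{1}sum_p -sum_q.
rewrite -(crt_factor (prime_gt0 p_prime) (prime_gt0 q_prime)
  (pq_coprime p_prime q_prime p_neq_q) w_prim (fun a => chi_p a ^+ 2) (fun b => chi_q b ^+ 2)).
rewrite /eta !sum_indicator -big_split; apply: eq_bigr => k _ /=.
have [_ sum] := whiteman_indicator p_prime q_prime p_neq_q p_odd q_odd gcd_pred gp gq (ltn_ord k).
rewrite -mulrDl !qchar_mod -!rmorphXn -rmorphM /= -exprMn -/(wchar p q g k).
by rewrite -sum rmorphD /= !rmorph_nat.
Qed.

Lemma eta_diff_sq : (eta R p q g 0 - eta R p q g 1) ^+ 2 =
  (qchar p g p.-1 * qchar q g q.-1)%:~R * N%:R.
Proof.
have [wq_prim wp_prim] := w_factors.
rewrite eta_diff exprMn (gauss_sq p_prime p_odd gp wq_prim u0_ndvd).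
by rewrite (gauss_sq q_prime q_odd gq wp_prim v0_ndvd) rmorphM natrM mulrACA.
Qed.
End WhitemanPeriods.
End Periods.

(* Solving the linear relations for the periods: writing d_0 = (s + A)/2,
   d_1 = (s - A)/2 for each pair, the left side becomes (1 + C^2)/4 + ABC/2. *)
Lemma period_identity (F : fieldType) (P eps d0p d1p d0q d1q e0 e1 : F) :
  2%:R != 0 :> F ->
  (e0 - e1) ^+ 2 = - P -> (d0p - d1p) * (d0q - d1q) * (e0 - e1) = eps * P ->
  d0p + d1p = -1 -> d0q + d1q = -1 -> e0 + e1 = 1 ->
  e0 ^+ 2 * (d1p * d1q + d0p * d0q) + e1 ^+ 2 * (d1p * d0q + d0p * d1q)
  = (1 - P) / 4%:R + eps * P / 2%:R.
Proof.
move=> two_neq0 sqC prodABC sum_p sum_q sum_e.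
have four_neq0 : 4%:R != 0 :> F by rewrite (natrM F 2 2) mulf_neq0.
rewrite -prodABC -[P]opprK -sqC.
have -> : d1p = -1 - d0p by rewrite -sum_p addrC addKr.
have -> : d1q = -1 - d0q by rewrite -sum_q addrC addKr.
have -> : e1 = 1 - e0 by rewrite -sum_e addrC addKr.
field.
by rewrite four_neq0 two_neq0.
Qed.

Unset Implicit Arguments.

Theorem lemma2 (R : realType) (p q g : nat) :
  prime p -> prime q -> p != q -> odd p -> odd q ->
  (p %% 4 = 1)%N -> (q %% 4 = 3)%N -> gcdn p.-1 q.-1 = 2%N ->
  prim_root_mod p g -> prim_root_mod q g ->
  exists eps : R[i], (eps = 1 \/ eps = -1) /\
    (eta R p q g 0) ^+ 2 * (delta R p g 1 * delta R q g 1 + delta R p g 0 * delta R q g 0)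
    + (eta R p q g 1) ^+ 2 * (delta R p g 1 * delta R q g 0 + delta R p g 0 * delta R q g 1)
    = (1 - (p * q)%:R) / 4 + eps * (p * q)%:R / 2.
Proof.
move=> p_prime q_prime p_neq_q p_odd q_odd p_mod4 q_mod4 gcd_pred gp gq.
have sign_p : qchar p g p.-1 = 1 by rewrite qchar_pred_mod4 // p_mod4.
have sign_q : qchar q g q.-1 = -1 by rewrite qchar_pred_mod4 // q_mod4.
have eta_sq := eta_diff_sq R p_prime q_prime p_neq_q p_odd q_odd gcd_pred gp gq.
rewrite sign_p sign_q mul1r rmorphN1 mulN1r in eta_sq.
set ABC := (delta R p g 0 - delta R p g 1) * (delta R q g 0 - delta R q g 1) *
           (eta R p q g 0 - eta R p q g 1).
have ABC_sq : ABC ^+ 2 = (p * q)%:R ^+ 2.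
  rewrite !exprMn !delta_diff_sq // eta_sq sign_p sign_q rmorph1 rmorphN1.
  by rewrite natrM; ring.
have [eps eps_sign ABC_eps] : exists2 eps : R[i], eps = 1 \/ eps = -1 & ABC = eps * (p * q)%:R.
  move/eqP: ABC_sq; rewrite eqf_sqr => /orP [/eqP -> | /eqP ->].
    by exists 1; [left | rewrite mul1r].
  by exists (-1); [right | rewrite mulN1r].
exists eps; split => //.
apply: period_identity eta_sq ABC_eps (delta_add _ _ _ _) (delta_add _ _ _ _)
  (eta_add R p_prime q_prime p_neq_q p_odd q_odd gcd_pred gp gq) => //.
by rewrite pnatr_eq0.
Qed.
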